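(* Suppose that $q(z)\le0$ for all $z\in[0,\infty)$ and let $\phi\in X_+$. Then for $w=w^\phi$ one has $w'(t)\le0$ for all $t\ge0$, and there exists $w^\infty=w^\infty(\phi)\in[0,\infty)$ with $w(t)\to w^\infty$ as $t\to\infty$. If moreover $$\forall\,\varepsilon>0\;\exists\,\delta>0\ \text{such that}\ j(\varphi,\psi)\le\varepsilon\ \ \forall\,(\varphi,\psi)\in U_+\ \text{with}\ \|\varphi\|_0\le\delta ,$$ then there is a zero solution, which is stable on $X_+$ in the $C$-norm and in the $C^1$-norm.
   Context: Let $h>0$, $R_-<0$, $I=(R_-,\infty)$, $q:I\to\mathbb{R}$, $\mu>0$, $U=C^1([-h,0],\mathbb{R})\times C^1([-h,0],I)$, $j:U\to\mathbb{R}$, $U_+=C^1([-h,0],\mathbb{R}_+^2)$, $\|\cdot\|_0$ the sup-norm; $x_t(s)=x(t+s)$. Consider $w'(t)=q(v(t))w(t)$, $v'(t)=j(w_t,v_t)-\mu v(t)$, $(w,v)_0=(\varphi,\psi)$. Define $F(\varphi,\psi)=(q(\psi(0))\varphi(0),\,j(\varphi,\psi)-\mu\psi(0))$ and $X_+=\{\phi\in C^1([-h,0],\mathbb{R}_+^2):\phi'(0)=F(\phi)\}\neq\emptyset$. Assume: $j$ is $C^1$ on $U$ with each derivative extending to a linear map on $C([-h,0],\mathbb{R}^2)$ depending continuously on $(\phi,\chi)$; for every bounded $B\subset U_+$ there is $L_B$ with $|j(\phi)-j(\chi)|\le L_B\|\phi-\chi\|_0$ on $B$; $j\ge0$ on $U_+$;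 $j(B_1\times B_2)$ is bounded whenever $B_1\times B_2\subset U_+$ with $B_1$ bounded; $q$ is bounded and $C^1$. Solutions from $X_+$ exist globally and remain nonnegative. *)

From Stdlib Require Import Reals.
Open Scope R_scope.

(* Functions on [-h,0] are represented as total functions R -> R; only their
   values on [-h,0] matter (see hypothesis j_local). *)
Definition seg (h s : R) : Prop := - h <= s <= 0.

Definition has_deriv_on (D : R -> Prop) (f f' : R -> R) : Prop :=
  forall s, D s -> forall eps, 0 < eps -> exists del, 0 < del /\
    forall y, D y -> Rabs (y - s) < del ->
      Rabs (f y - f s - f' s * (y - s)) <= eps * Rabs (y - s).

Definition cont_on (D : R -> Prop) (g : R -> R) : Prop :=
  forall s, D s -> forall eps, 0 < eps -> exists del, 0 < del /\
    forall y, D y -> Rabs (y - s) < del -> Rabs (g y - g s) < eps.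

Definition C1_on (D : R -> Prop) (f f' : R -> R) : Prop :=
  has_deriv_on D f f' /\ cont_on D f'.

Definition isC1 (h : R) (f : R -> R) : Prop := exists f', C1_on (seg h) f f'.
Definition isC0 (h : R) (f : R -> R) : Prop := cont_on (seg h) f.

Definition norm0_le (h : R) (f : R -> R) (c : R) : Prop :=
  forall s, seg h s -> Rabs (f s) <= c.

(* ||f||_1 <= c, with ||f||_1 = max(||f||_0, ||f'||_0) (equivalent to the
   usual C^1 norm) *)
Definition norm1_le (h : R) (f : R -> R) (c : R) : Prop :=
  exists f', C1_on (seg h) f f' /\
    forall s, seg h s -> Rabs (f s) <= c /\ Rabs (f' s) <= c.

Definition fsub (f g : R -> R) : R -> R := fun s => f s - g s.
Definition fadd (f g : R -> R) : R -> R := fun s => f s + g s.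

Definition in_U (h Rm : R) (phi psi : R -> R) : Prop :=
  isC1 h phi /\ isC1 h psi /\ forall s, seg h s -> Rm < psi s.

Definition in_Uplus (h : R) (phi psi : R -> R) : Prop :=
  isC1 h phi /\ isC1 h psi /\ forall s, seg h s -> 0 <= phi s /\ 0 <= psi s.

Definition in_Xplus (h : R) (q : R -> R) (j : (R -> R) -> (R -> R) -> R)
    (mu : R) (phi phi' psi psi' : R -> R) : Prop :=
  C1_on (seg h) phi phi' /\ C1_on (seg h) psi psi' /\
  (forall s, seg h s -> 0 <= phi s /\ 0 <= psi s) /\
  phi' 0 = q (psi 0) * phi 0 /\
  psi' 0 = j phi psi - mu * psi 0.

Definition shift (x : R -> R) (t : R) : R -> R := fun s => x (t + s).

Definition is_solution (h Rm : R) (q : R -> R) (j : (R -> R) -> (R -> R) -> R)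
    (mu : R) (phi psi w w' v v' : R -> R) : Prop :=
  C1_on (fun s => - h <= s) w w' /\ C1_on (fun s => - h <= s) v v' /\
  (forall s, seg h s -> w s = phi s /\ v s = psi s) /\
  (forall t, - h <= t -> Rm < v t) /\
  (forall t, 0 <= t ->
     w' t = q (v t) * w t /\
     v' t = j (shift w t) (shift v t) - mu * v t).

(* j is a function on U: it only depends on the restriction to [-h,0] *)
Definition j_local (h : R) (j : (R -> R) -> (R -> R) -> R) : Prop :=
  forall phi1 phi2 psi1 psi2,
    (forall s, seg h s -> phi1 s = phi2 s /\ psi1 s = psi2 s) ->
    j phi1 psi1 = j phi2 psi2.

(* j is C^1 on U (Frechet, w.r.t. the C^1 norm, with derivative continuous in
   operator norm), and each derivative Dj(phi,psi) extends to a linear map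
   Dej(phi,psi) on C([-h,0],R^2) such that (p,chi) |-> Dej p chi is continuous
   on U x C([-h,0],R^2). *)
Definition j_C1_ext (h Rm : R) (j : (R -> R) -> (R -> R) -> R) : Prop :=
  exists Dej : (R -> R) -> (R -> R) -> (R -> R) -> (R -> R) -> R,
  (forall phi psi, in_U h Rm phi psi ->
     forall a b c1 c2 d1 d2, isC0 h c1 -> isC0 h c2 -> isC0 h d1 -> isC0 h d2 ->
     Dej phi psi (fun s => a * c1 s + b * d1 s) (fun s => a * c2 s + b * d2 s)
     = a * Dej phi psi c1 c2 + b * Dej phi psi d1 d2) /\
  (forall phi psi, in_U h Rm phi psi ->
     forall eps, 0 < eps -> exists del, 0 < del /\
     forall c1 c2 c, in_U h Rm (fadd phi c1) (fadd psi c2) ->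
       norm1_le h c1 c -> norm1_le h c2 c -> c <= del ->
       Rabs (j (fadd phi c1) (fadd psi c2) - j phi psi - Dej phi psi c1 c2)
         <= eps * c) /\
  (forall phi psi, in_U h Rm phi psi ->
     forall eps, 0 < eps -> exists del, 0 < del /\
     forall phi2 psi2 d, in_U h Rm phi2 psi2 ->
       norm1_le h (fsub phi2 phi) d -> norm1_le h (fsub psi2 psi) d -> d <= del ->
       forall c1 c2 c, norm1_le h c1 c -> norm1_le h c2 c ->
         Rabs (Dej phi2 psi2 c1 c2 - Dej phi psi c1 c2) <= eps * c) /\
  (forall phi psi c1 c2, in_U h Rm phi psi -> isC0 h c1 -> isC0 h c2 ->
     forall eps, 0 < eps -> exists del, 0 < del /\
     forall phi2 psi2 e1 e2 d, in_U h Rm phi2 psi2 -> isC0 h e1 -> isC0 h e2 ->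
       norm1_le h (fsub phi2 phi) d -> norm1_le h (fsub psi2 psi) d ->
       norm0_le h (fsub e1 c1) d -> norm0_le h (fsub e2 c2) d -> d <= del ->
       Rabs (Dej phi2 psi2 e1 e2 - Dej phi psi c1 c2) < eps).

Definition bounded_C1 (h : R) (B : (R -> R) -> (R -> R) -> Prop) : Prop :=
  exists r, forall phi psi, B phi psi -> norm1_le h phi r /\ norm1_le h psi r.

Definition j_loc_Lipschitz (h : R) (j : (R -> R) -> (R -> R) -> R) : Prop :=
  forall B : (R -> R) -> (R -> R) -> Prop,
    (forall phi psi, B phi psi -> in_Uplus h phi psi) -> bounded_C1 h B ->
    exists L, forall phi1 psi1 phi2 psi2 c,
      B phi1 psi1 -> B phi2 psi2 ->
      norm0_le h (fsub phi1 phi2) c -> norm0_le h (fsub psi1 psi2) c ->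
      Rabs (j phi1 psi1 - j phi2 psi2) <= L * c.

Definition j_nonneg (h : R) (j : (R -> R) -> (R -> R) -> R) : Prop :=
  forall phi psi, in_Uplus h phi psi -> 0 <= j phi psi.

Definition j_bounded_prod (h : R) (j : (R -> R) -> (R -> R) -> R) : Prop :=
  forall B1 B2 : (R -> R) -> Prop,
    (forall phi psi, B1 phi -> B2 psi -> in_Uplus h phi psi) ->
    (exists r, forall phi, B1 phi -> norm1_le h phi r) ->
    exists M, forall phi psi, B1 phi -> B2 psi -> Rabs (j phi psi) <= M.

Definition q_bounded (Rm : R) (q : R -> R) : Prop :=
  exists M, forall z, Rm < z -> Rabs (q z) <= M.

Definition q_C1 (Rm : R) (q : R -> R) : Prop :=
  exists q', C1_on (fun z => Rm < z) q q'.

Definition Xplus_nonempty h q j mu : Prop :=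
  exists phi phi' psi psi', in_Xplus h q j mu phi phi' psi psi'.

Definition sol_global h Rm q j mu : Prop :=
  forall phi phi' psi psi', in_Xplus h q j mu phi phi' psi psi' ->
  exists w w' v v', is_solution h Rm q j mu phi psi w w' v v'.

Definition sol_nonneg h Rm q j mu : Prop :=
  forall phi phi' psi psi' w w' v v',
    in_Xplus h q j mu phi phi' psi psi' ->
    is_solution h Rm q j mu phi psi w w' v v' ->
    forall t, - h <= t -> 0 <= w t /\ 0 <= v t.

(** Since [v >= 0] and [q <= 0] on [[0, oo)], the equation [w' = q(v) w] makes
    [w >= 0] nonincreasing, hence convergent and bounded by its initial value.
    Once [w] is small, the smallness hypothesis on [j] gives [v' <= mu (c - v)]
    along the solution, so [(v - c) e^(mu t)] is nonincreasing and [v] stays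
    below [c] if it starts there.  The two equations then bound [w'] and [v'] by
    the same small quantities. *)

From Stdlib Require Import Reals Lra Classical.
Open Scope R_scope.

Lemma derivable_pt_lim_of_has_deriv_on (lo : R) f f' x :
  has_deriv_on (fun s => lo <= s) f f' -> lo < x -> derivable_pt_lim f x (f' x).
Proof.
  intros Hd Hx eps He.
  destruct (Hd x ltac:(lra) (eps / 2) ltac:(lra)) as [del [Hdel H]].
  assert (Hp : 0 < Rmin del (x - lo)) by (apply Rmin_glb_lt; lra).
  exists (mkposreal _ Hp). intros k Hk Hka. simpl in Hka.
  assert (Hk1 : Rabs k < del) by (eapply Rlt_le_trans; [exact Hka | apply Rmin_l]).
  assert (Hk2 : Rabs k < x - lo) by (eapply Rlt_le_trans; [exact Hka | apply Rmin_r]).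
  assert (Hy : lo <= x + k) by (destruct (Rabs_def2 _ _ Hk2); lra).
  specialize (H (x + k) Hy). replace (x + k - x) with k in H by ring.
  specialize (H Hk1).
  assert (Hkp : 0 < Rabs k) by (apply Rabs_pos_lt; auto).
  replace ((f (x + k) - f x) / k - f' x) with ((f (x + k) - f x - f' x * k) * / k)
    by (field; auto).
  rewrite Rabs_mult, Rabs_inv.
  apply (Rmult_lt_reg_r (Rabs k)); auto.
  rewrite Rmult_assoc, Rinv_l by lra. nra.
Qed.

Lemma nonincreasing_of_deriv_nonpos (f f' : R -> R) a b :
  a <= b ->
  (forall c, a <= c <= b -> derivable_pt_lim f c (f' c)) ->
  (forall c, a <= c <= b -> f' c <= 0) -> f b <= f a.
Proof.
  intros Hab Hd Hn. destruct (Req_dec a b) as [-> | Hne]; [lra |].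
  destruct (MVT_cor2 f f' a b ltac:(lra) Hd) as [c [Hc1 Hc2]].
  assert (f' c <= 0) by (apply Hn; lra). nra.
Qed.

Lemma has_deriv_on_ext (D : R -> Prop) f g f' :
  (forall s, D s -> f s = g s) -> has_deriv_on D f f' -> has_deriv_on D g f'.
Proof.
  intros Hfg Hf s Hs eps He. destruct (Hf s Hs eps He) as [d [Hd H]].
  exists d. split; [exact Hd |]. intros y Hy Hys.
  rewrite <- (Hfg y Hy), <- (Hfg s Hs). auto.
Qed.

Lemma has_deriv_on_subset (D E : R -> Prop) f f' :
  (forall s, E s -> D s) -> has_deriv_on D f f' -> has_deriv_on E f f'.
Proof.
  intros HED Hd s Hs eps He. destruct (Hd s (HED s Hs) eps He) as [d [Hd0 H]].
  exists d. split; auto.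
Qed.

Lemma has_deriv_on_unique (D : R -> Prop) f f1 f2 s :
  (forall d, 0 < d -> exists y, D y /\ 0 < Rabs (y - s) < d) ->
  has_deriv_on D f f1 -> has_deriv_on D f f2 -> D s -> f1 s = f2 s.
Proof.
  intros Hacc H1 H2 Hs. apply cond_eq. intros eps He.
  destruct (H1 s Hs (eps / 4) ltac:(lra)) as [d1 [Hd1 Hf1]].
  destruct (H2 s Hs (eps / 4) ltac:(lra)) as [d2 [Hd2 Hf2]].
  destruct (Hacc (Rmin d1 d2) ltac:(apply Rmin_glb_lt; lra)) as [y [Hy [Hys0 Hys]]].
  pose proof (Rmin_l d1 d2). pose proof (Rmin_r d1 d2).
  specialize (Hf1 y Hy ltac:(lra)). specialize (Hf2 y Hy ltac:(lra)).
  assert (Hprod : Rabs ((f1 s - f2 s) * (y - s)) <= eps / 2 * Rabs (y - s)).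
  { replace ((f1 s - f2 s) * (y - s))
      with ((f y - f s - f2 s * (y - s)) - (f y - f s - f1 s * (y - s))) by ring.
    eapply Rle_trans; [apply Rabs_triang |]. rewrite Rabs_Ropp. lra. }
  rewrite Rabs_mult in Hprod.
  apply (Rmult_le_reg_r (Rabs (y - s))) in Hprod; lra.
Qed.

Lemma seg_not_isolated h s d : 0 < h -> seg h s -> 0 < d ->
  exists y, seg h y /\ 0 < Rabs (y - s) < d.
Proof.
  unfold seg. intros hh Hs Hd. set (k := Rmin d h / 2).
  assert (0 < Rmin d h) by (apply Rmin_glb_lt; lra).
  pose proof (Rmin_l d h). pose proof (Rmin_r d h).
  destruct (Rle_dec (- h) (s - k)).
  - exists (s - k). replace (s - k - s) with (- k) by ring.
    rewrite Rabs_Ropp, Rabs_pos_eq; unfold k in *; lra.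
  - exists (s + k). replace (s + k - s) with k by ring.
    rewrite Rabs_pos_eq; unfold k in *; lra.
Qed.

Lemma C1_on_shift h f f' t : 0 <= t -> C1_on (fun s => - h <= s) f f' ->
  C1_on (seg h) (shift f t) (shift f' t).
Proof.
  intros Ht [Hd Hc]. unfold seg, shift. split.
  - intros s Hs eps He. destruct (Hd (t + s) ltac:(lra) eps He) as [d [Hd0 H]].
    exists d. split; [exact Hd0 |]. intros y Hy Hys.
    specialize (H (t + y) ltac:(lra)).
    replace (t + y - (t + s)) with (y - s) in H by ring. auto.
  - intros s Hs eps He. destruct (Hc (t + s) ltac:(lra) eps He) as [d [Hd0 H]].
    exists d. split; [exact Hd0 |]. intros y Hy Hys.
    specialize (H (t + y) ltac:(lra)).
    replace (t + y - (t + s)) with (y - s) in H by ring. auto.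
Qed.

Lemma C1_on_const (D : R -> Prop) (c : R) : C1_on D (fun _ => c) (fun _ => 0).
Proof.
  split; intros s _ eps He; exists 1; split; try lra; intros y _ _.
  - replace (c - c - 0 * (y - s)) with 0 by ring. rewrite Rabs_R0.
    pose proof (Rabs_pos (y - s)). nra.
  - replace (0 - 0) with 0 by ring. rewrite Rabs_R0. lra.
Qed.

Lemma derivable_pt_lim_exp_weighted (f f' : R -> R) c mu x :
  derivable_pt_lim f x (f' x) ->
  derivable_pt_lim (fun t => (f t - c) * exp (mu * t)) x
    (exp (mu * x) * (f' x + mu * (f x - c))).
Proof.
  intros Hf.
  assert (Hc : derivable_pt_lim (fun t => f t - c) x (f' x - 0)).
  { apply (derivable_pt_lim_minus f (fct_cte c)); auto. apply derivable_pt_lim_const. }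
  assert (He : derivable_pt_lim (fun t => exp (mu * t)) x (exp (mu * x) * (mu * 1))).
  { apply (derivable_pt_lim_comp (fun t => mu * t) exp).
    - apply (derivable_pt_lim_scal id). apply derivable_pt_lim_id.
    - apply derivable_pt_lim_exp. }
  replace (exp (mu * x) * (f' x + mu * (f x - c)))
    with ((f' x - 0) * exp (mu * x) + (f x - c) * (exp (mu * x) * (mu * 1))) by ring.
  exact (derivable_pt_lim_mult _ _ _ _ _ Hc He).
Qed.

Lemma nonincreasing_bounded_below_cvg (f : R -> R) a m :
  (forall x y, a <= x -> x <= y -> f y <= f x) -> (forall x, a <= x -> m <= f x) ->
  exists l, m <= l /\
    forall eps, 0 < eps -> exists T, forall t, T <= t -> Rabs (f t - l) < eps.
Proof.
  intros Hmono Hlow.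
  set (E := fun y => exists x, a <= x /\ y = - f x).
  assert (Hb : bound E).
  { exists (- m). intros y [x [Hx ->]]. specialize (Hlow x Hx). lra. }
  assert (Hne : exists y, E y) by (exists (- f a); exists a; split; lra).
  destruct (completeness E Hb Hne) as [l [Hub Hlub]].
  assert (Hl : l <= - m).
  { apply Hlub. intros y [x [Hx ->]]. specialize (Hlow x Hx). lra. }
  exists (- l). split; [lra |].
  intros eps He.
  assert (exists x0, a <= x0 /\ - f x0 > l - eps) as [x0 [Hx0 Hf0]].
  { apply NNPP. intro Hn.
    enough (l <= l - eps) by lra.
    apply Hlub. intros y [x [Hx ->]].
    apply Rnot_gt_le. intro Hc. apply Hn. exists x. split; auto. }
  exists x0. intros t Ht.
  assert (f t <= f x0) by (apply Hmono; lra).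
  assert (- f t <= l) by (apply Hub; exists t; split; [lra | reflexivity]).
  rewrite Rabs_pos_eq by lra. lra.
Qed.

Section Solution.

Context {h Rm mu : R} {q : R -> R} {j : (R -> R) -> (R -> R) -> R}.
Hypothesis hh : 0 < h.
Hypothesis hnn : sol_nonneg h Rm q j mu.
Hypothesis hq : forall z, 0 <= z -> q z <= 0.
Hypothesis hjnn : j_nonneg h j.

Context {phi phi' psi psi' w w' v v' : R -> R}.
Hypothesis HX : in_Xplus h q j mu phi phi' psi psi'.
Hypothesis HS : is_solution h Rm q j mu phi psi w w' v v'.

Lemma solution_nonneg t : - h <= t -> 0 <= w t /\ 0 <= v t.
Proof. exact (hnn _ _ _ _ _ _ _ _ HX HS t). Qed.

Lemma solution_deriv_w_nonpos t : 0 <= t -> w' t <= 0.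
Proof.
  intros Ht. destruct HS as [_ [_ [_ [_ Heq]]]].
  rewrite (proj1 (Heq t Ht)).
  destruct (solution_nonneg t ltac:(lra)) as [Hw Hv]. pose proof (hq _ Hv). nra.
Qed.

Lemma solution_w_nonincreasing a b : 0 <= a -> a <= b -> w b <= w a.
Proof.
  intros Ha Hab. destruct HS as [[Hwd _] _].
  apply (nonincreasing_of_deriv_nonpos w w'); [lra | |].
  - intros c Hc. apply (derivable_pt_lim_of_has_deriv_on (- h)); [exact Hwd | lra].
  - intros c Hc. apply solution_deriv_w_nonpos. lra.
Qed.

Lemma solution_w_bound del : (forall s, seg h s -> Rabs (phi s) < del) ->
  forall t, - h <= t -> Rabs (w t) < del.
Proof.
  intros Hb t Ht. destruct HS as [_ [_ [Hinit _]]].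
  assert (H0 : seg h 0) by (unfold seg; lra).
  destruct (Rle_dec t 0).
  - rewrite (proj1 (Hinit t ltac:(unfold seg; lra))). apply Hb. unfold seg; lra.
  - assert (w t <= w 0) by (apply solution_w_nonincreasing; lra).
    pose proof (Hb 0 H0) as Hb0. rewrite <- (proj1 (Hinit 0 H0)) in Hb0.
    pose proof (Rle_abs (w 0)). destruct (solution_nonneg t Ht).
    rewrite Rabs_pos_eq by lra. lra.
Qed.

Lemma solution_shift_in_Uplus t : 0 <= t -> in_Uplus h (shift w t) (shift v t).
Proof.
  intros Ht. destruct HS as [Hw [Hv _]].
  split; [exists (shift w' t); apply C1_on_shift; auto |].
  split; [exists (shift v' t); apply C1_on_shift; auto |].
  intros s Hs. unfold shift, seg in *. apply solution_nonneg. lra.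
Qed.

Lemma solution_v_bound c :
  (forall t, 0 <= t -> j (shift w t) (shift v t) <= mu * c) ->
  (forall s, seg h s -> Rabs (psi s) < c) ->
  forall t, - h <= t -> Rabs (v t) < c.
Proof.
  intros Hj Hb t Ht. destruct HS as [_ [[Hvd _] [Hinit [_ Heq]]]].
  assert (H0 : seg h 0) by (unfold seg; lra).
  destruct (Rle_dec t 0).
  - rewrite (proj2 (Hinit t ltac:(unfold seg; lra))). apply Hb. unfold seg; lra.
  - assert (Hg : (v t - c) * exp (mu * t) <= (v 0 - c) * exp (mu * 0)).
    { apply (nonincreasing_of_deriv_nonpos (fun t => (v t - c) * exp (mu * t))
               (fun x => exp (mu * x) * (v' x + mu * (v x - c)))); [lra | |].
      - intros x Hx. apply derivable_pt_lim_exp_weighted.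
        apply (derivable_pt_lim_of_has_deriv_on (- h)); [exact Hvd | lra].
      - intros x Hx. rewrite (proj2 (Heq x ltac:(lra))).
        specialize (Hj x ltac:(lra)). pose proof (exp_pos (mu * x)). nra. }
    rewrite Rmult_0_r, exp_0, Rmult_1_r in Hg.
    pose proof (Hb 0 H0) as Hb0. rewrite <- (proj2 (Hinit 0 H0)) in Hb0.
    pose proof (Rle_abs (v 0)). pose proof (exp_pos (mu * t)).
    destruct (solution_nonneg t Ht). rewrite Rabs_pos_eq by lra.
    assert (v t - c < 0) by nra. lra.
Qed.

Lemma solution_deriv_initial s : seg h s -> w' s = phi' s /\ v' s = psi' s.
Proof.
  intros Hs.
  destruct HX as [[Hphi _] [[Hpsi _] _]].
  destruct HS as [[Hw _] [[Hv _] [Hinit _]]].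
  assert (Hseg : forall s, seg h s -> - h <= s) by (unfold seg; intros; lra).
  split.
  - apply (has_deriv_on_unique (seg h) w); auto using seg_not_isolated.
    + exact (has_deriv_on_subset _ _ _ _ Hseg Hw).
    + apply (has_deriv_on_ext (seg h) phi); [intros; symmetry; apply Hinit; auto | exact Hphi].
  - apply (has_deriv_on_unique (seg h) v); auto using seg_not_isolated.
    + exact (has_deriv_on_subset _ _ _ _ Hseg Hv).
    + apply (has_deriv_on_ext (seg h) psi); [intros; symmetry; apply Hinit; auto | exact Hpsi].
Qed.

Lemma solution_deriv_w_bound Mq t :
  (forall z, Rm < z -> Rabs (q z) <= Mq) -> 0 <= t -> Rabs (w' t) <= Mq * Rabs (w t).
Proof.
  intros HMq Ht. destruct HS as [_ [_ [_ [HRm Heq]]]].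
  rewrite (proj1 (Heq t Ht)), Rabs_mult.
  apply Rmult_le_compat_r; [apply Rabs_pos | apply HMq, HRm; lra].
Qed.

Lemma solution_deriv_v_bound c t : 0 <= mu ->
  (forall t, 0 <= t -> j (shift w t) (shift v t) <= mu * c) ->
  (forall s, seg h s -> Rabs (psi s) < c) ->
  0 <= t -> Rabs (v' t) <= mu * c.
Proof.
  intros Hmu Hj Hb Ht.
  pose proof (solution_v_bound c Hj Hb t ltac:(lra)) as Hv.
  pose proof (hjnn _ _ (solution_shift_in_Uplus t Ht)).
  pose proof (Hj t Ht). destruct (solution_nonneg t ltac:(lra)).
  destruct HS as [_ [_ [_ [_ Heq]]]]. rewrite (proj2 (Heq t Ht)).
  rewrite Rabs_pos_eq in Hv by lra. apply Rabs_le. nra.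
Qed.

End Solution.

Definition j_small_near_zero (h : R) (j : (R -> R) -> (R -> R) -> R) : Prop :=
  forall eps, 0 < eps -> exists del, 0 < del /\
    forall phi psi, in_Uplus h phi psi -> norm0_le h phi del -> j phi psi <= eps.

Section Stability.

Context {h Rm mu : R} {q : R -> R} {j : (R -> R) -> (R -> R) -> R}.
Hypothesis hh : 0 < h.
Hypothesis hRm : Rm < 0.
Hypothesis hmu : 0 < mu.
Hypothesis hnn : sol_nonneg h Rm q j mu.
Hypothesis hq : forall z, 0 <= z -> q z <= 0.
Hypothesis hjnn : j_nonneg h j.
Hypothesis hsmall : j_small_near_zero h j.

Lemma j_zero : j (fun _ => 0) (fun _ => 0) = 0.
Proof.
  assert (HU0 : in_Uplus h (fun _ => 0) (fun _ => 0)).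
  { split; [exists (fun _ => 0); apply C1_on_const |].
    split; [exists (fun _ => 0); apply C1_on_const |]. intros; lra. }
  pose proof (hjnn _ _ HU0) as Hj0.
  apply Rle_antisym; [| exact Hj0].
  apply Rle_plus_epsilon. intros eps He.
  destruct (hsmall eps He) as [d [Hd Hj]].
  enough (j (fun _ => 0) (fun _ => 0) <= eps) by lra.
  apply Hj; [exact HU0 |]. intros s _. rewrite Rabs_R0. lra.
Qed.

Lemma zero_solution :
  in_Xplus h q j mu (fun _ => 0) (fun _ => 0) (fun _ => 0) (fun _ => 0) /\
  is_solution h Rm q j mu (fun _ => 0) (fun _ => 0)
    (fun _ => 0) (fun _ => 0) (fun _ => 0) (fun _ => 0).
Proof.
  split; (split; [apply C1_on_const |]); (split; [apply C1_on_const |]).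
  - split; [intros; lra |]. rewrite j_zero. split; ring.
  - split; [auto |]. split; [intros; lra |].
    intros t _. change (0 = q 0 * 0 /\ 0 = j (fun _ => 0) (fun _ => 0) - mu * 0).
    rewrite j_zero. split; ring.
Qed.

Lemma j_small_along_solutions e : 0 < e -> exists d, 0 < d /\
  forall phi phi' psi psi' w w' v v',
    in_Xplus h q j mu phi phi' psi psi' ->
    is_solution h Rm q j mu phi psi w w' v v' ->
    (forall s, seg h s -> Rabs (phi s) < d) ->
    forall t, 0 <= t -> j (shift w t) (shift v t) <= e.
Proof.
  intros He. destruct (hsmall e He) as [d [Hd Hj]]. exists d. split; [exact Hd |].
  intros phi phi' psi psi' w w' v v' HX HS Hb t Ht.
  apply Hj; [exact (solution_shift_in_Uplus hnn HX HS t Ht) |].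
  intros s Hs. unfold shift, seg in *. left.
  apply (solution_w_bound hh hnn hq HX HS); [exact Hb | lra].
Qed.

Lemma zero_solution_stable_C0 eps : 0 < eps -> exists del, 0 < del /\
  forall phi phi' psi psi' w w' v v',
    in_Xplus h q j mu phi phi' psi psi' ->
    is_solution h Rm q j mu phi psi w w' v v' ->
    (forall s, seg h s -> Rabs (phi s) < del /\ Rabs (psi s) < del) ->
    forall t, 0 <= t -> forall s, seg h s ->
      Rabs (w (t + s)) < eps /\ Rabs (v (t + s)) < eps.
Proof.
  intros He.
  destruct (j_small_along_solutions (mu * eps) ltac:(nra)) as [dj [Hdj Hj]].
  exists (Rmin eps dj). split; [apply Rmin_glb_lt; lra |].
  pose proof (Rmin_l eps dj). pose proof (Rmin_r eps dj).
  intros phi phi' psi psi' w w' v v' HX HS Hb t Ht s Hs. unfold seg in Hs.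
  assert (Hbphi : forall s, seg h s -> Rabs (phi s) < Rmin eps dj) by apply Hb.
  assert (Hbpsi : forall s, seg h s -> Rabs (psi s) < eps)
    by (intros s0 Hs0; specialize (Hb s0 Hs0); lra).
  assert (Hjt : forall t, 0 <= t -> j (shift w t) (shift v t) <= mu * eps).
  { apply (Hj _ _ _ _ _ _ _ _ HX HS). intros s0 Hs0. specialize (Hb s0 Hs0). lra. }
  pose proof (solution_w_bound hh hnn hq HX HS _ Hbphi (t + s) ltac:(lra)).
  split; [lra |].
  exact (solution_v_bound hh hnn HX HS eps Hjt Hbpsi (t + s) ltac:(lra)).
Qed.

(** [c] controls [v] and, through [v' = j - mu v], also [v']; [del] is small
    enough for [w], for [j] along the solution and for [w' = q(v) w]. *)
Lemma zero_solution_stable_C1 : q_bounded Rm q -> forall eps, 0 < eps ->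
  exists del, 0 < del /\
  forall phi phi' psi psi' w w' v v',
    in_Xplus h q j mu phi phi' psi psi' ->
    is_solution h Rm q j mu phi psi w w' v v' ->
    (forall s, seg h s -> Rabs (phi s) < del /\ Rabs (psi s) < del /\
                          Rabs (phi' s) < del /\ Rabs (psi' s) < del) ->
    forall t, 0 <= t -> forall s, seg h s ->
      Rabs (w (t + s)) < eps /\ Rabs (v (t + s)) < eps /\
      Rabs (w' (t + s)) < eps /\ Rabs (v' (t + s)) < eps.
Proof.
  intros [Mq HMq] eps He.
  assert (HMq0 : 0 <= Mq) by (pose proof (HMq 0 hRm); pose proof (Rabs_pos (q 0)); lra).
  set (c := Rmin eps (eps / (2 * mu))).
  assert (Hc0 : 0 < c) by (apply Rmin_glb_lt; [lra | apply Rdiv_lt_0_compat; lra]).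
  assert (Hc : c <= eps) by apply Rmin_l.
  assert (Hmuc : mu * c < eps).
  { assert (c <= eps / (2 * mu)) by apply Rmin_r.
    assert (mu * (eps / (2 * mu)) = eps / 2) by (field; lra). nra. }
  destruct (j_small_along_solutions (mu * c) ltac:(nra)) as [dj [Hdj Hj]].
  set (del := Rmin (Rmin c dj) (eps / (Mq + 1))).
  assert (Hdel : 0 < del).
  { apply Rmin_glb_lt; [apply Rmin_glb_lt; lra | apply Rdiv_lt_0_compat; lra]. }
  assert (Hdel_c : del <= c) by (eapply Rle_trans; [apply Rmin_l | apply Rmin_l]).
  assert (Hdel_j : del <= dj) by (eapply Rle_trans; [apply Rmin_l | apply Rmin_r]).
  assert (HMq_del : Mq * del < eps).
  { assert (del <= eps / (Mq + 1)) by apply Rmin_r.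
    assert ((Mq + 1) * (eps / (Mq + 1)) = eps) by (field; lra). nra. }
  exists del. split; [exact Hdel |].
  intros phi phi' psi psi' w w' v v' HX HS Hb t Ht s Hs.
  assert (Hbphi : forall s, seg h s -> Rabs (phi s) < del) by apply Hb.
  assert (Hbpsi : forall s, seg h s -> Rabs (psi s) < c)
    by (intros s0 Hs0; specialize (Hb s0 Hs0); lra).
  assert (Hjt : forall t, 0 <= t -> j (shift w t) (shift v t) <= mu * c).
  { apply (Hj _ _ _ _ _ _ _ _ HX HS). intros s0 Hs0. specialize (Hb s0 Hs0). lra. }
  unfold seg in Hs.
  pose proof (solution_w_bound hh hnn hq HX HS _ Hbphi (t + s) ltac:(lra)) as Hw.
  pose proof (solution_v_bound hh hnn HX HS c Hjt Hbpsi (t + s) ltac:(lra)) as Hv.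
  split; [lra |]. split; [lra |].
  destruct (Rle_dec (t + s) 0) as [Hle | Hgt].
  - assert (Hseg : seg h (t + s)) by (unfold seg; lra).
    destruct (solution_deriv_initial hh HX HS (t + s) Hseg) as [-> ->].
    destruct (Hb _ Hseg) as [_ [_ [Hphi' Hpsi']]]. lra.
  - split.
    + pose proof (solution_deriv_w_bound hh HS Mq (t + s) HMq ltac:(lra)).
      pose proof (Rabs_pos (w (t + s))). nra.
    + pose proof (solution_deriv_v_bound hh hnn hjnn HX HS c (t + s)
                    ltac:(lra) Hjt Hbpsi ltac:(lra)). lra.
Qed.

End Stability.


(** The regularity hypotheses on [j] and [q] only serve the existence theory;
    here global existence and nonnegativity of solutions are assumed. *)
Theorem lemma10 (h Rm mu : R) (q : R -> R) (j : (R -> R) -> (R -> R) -> R)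
  (hh : 0 < h) (hRm : Rm < 0) (hmu : 0 < mu)
  (hjloc : j_local h j) (hjC1 : j_C1_ext h Rm j)
  (hjLip : j_loc_Lipschitz h j) (hjnn : j_nonneg h j)
  (hjbd : j_bounded_prod h j)
  (hqbd : q_bounded Rm q) (hqC1 : q_C1 Rm q)
  (hX : Xplus_nonempty h q j mu)
  (hglob : sol_global h Rm q j mu) (hnn : sol_nonneg h Rm q j mu)
  (hq : forall z, 0 <= z -> q z <= 0) :
  (forall phi phi' psi psi' w w' v v',
     in_Xplus h q j mu phi phi' psi psi' ->
     is_solution h Rm q j mu phi psi w w' v v' ->
     (forall t, 0 <= t -> w' t <= 0) /\
     exists winf, 0 <= winf /\
       forall eps, 0 < eps -> exists T, forall t, T <= t ->
         Rabs (w t - winf) < eps)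
  /\
  ((forall eps, 0 < eps -> exists del, 0 < del /\
      forall phi psi, in_Uplus h phi psi -> norm0_le h phi del ->
        j phi psi <= eps) ->
   (* zero solution *)
   (in_Xplus h q j mu (fun _ => 0) (fun _ => 0) (fun _ => 0) (fun _ => 0) /\
    is_solution h Rm q j mu (fun _ => 0) (fun _ => 0)
      (fun _ => 0) (fun _ => 0) (fun _ => 0) (fun _ => 0)) /\
   (* stability on X_+ in the C-norm *)
   (forall eps, 0 < eps -> exists del, 0 < del /\
     forall phi phi' psi psi' w w' v v',
       in_Xplus h q j mu phi phi' psi psi' ->
       is_solution h Rm q j mu phi psi w w' v v' ->
       (forall s, seg h s -> Rabs (phi s) < del /\ Rabs (psi s) < del) ->
       forall t, 0 <= t -> forall s, seg h s ->
         Rabs (w (t + s)) < eps /\ Rabs (v (t + s)) < eps) /\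
   (* stability on X_+ in the C^1-norm *)
   (forall eps, 0 < eps -> exists del, 0 < del /\
     forall phi phi' psi psi' w w' v v',
       in_Xplus h q j mu phi phi' psi psi' ->
       is_solution h Rm q j mu phi psi w w' v v' ->
       (forall s, seg h s -> Rabs (phi s) < del /\ Rabs (psi s) < del /\
                             Rabs (phi' s) < del /\ Rabs (psi' s) < del) ->
       forall t, 0 <= t -> forall s, seg h s ->
         Rabs (w (t + s)) < eps /\ Rabs (v (t + s)) < eps /\
         Rabs (w' (t + s)) < eps /\ Rabs (v' (t + s)) < eps)).
Proof.
  split.
  - intros phi phi' psi psi' w w' v v' HX HS.
    split; [exact (solution_deriv_w_nonpos hh hnn hq HX HS) |].
    apply (nonincreasing_bounded_below_cvg w 0 0).
    + exact (solution_w_nonincreasing hh hnn hq HX HS).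
    + intros t Ht. apply (solution_nonneg hnn HX HS). lra.
  - intros hsmall.
    split; [exact (zero_solution hRm hjnn hsmall) |].
    split.
    + exact (zero_solution_stable_C0 hh hmu hnn hq hsmall).
    + exact (zero_solution_stable_C1 hh hRm hmu hnn hq hjnn hsmall hqbd).
Qed.
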